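(* Let $n\ge 2$ and let $\mathbf b_1,\mathbf b_2\in\mathbb R^n_+$ be linearly independent nonnegative vectors with $\operatorname{supp}\mathbf b_1\supseteq\operatorname{supp}\mathbf b_2$. Then the matrix $A=\mathbf b_1\mathbf b_1^T+\mathbf b_2\mathbf b_2^T$ has infinitely many minimal CP factorizations.
   Context: For $\mathbf x\in\mathbb R^n$, $\operatorname{supp}\mathbf x=\{i : x_i\neq 0\}$. A symmetric $n\times n$ matrix $A$ is completely positive if $A=BB^T$ for some entrywise nonnegative $n\times k$ matrix $B$; such an equality is a CP factorization of $A$. Only CP factorizations in which the columns of $B$ are pairwise linearly independent are considered, and two CP factorizations $A=BB^T=CC^T$ are considered equal if $C=BP$ for a permutation matrix $P$. The cp-rank of $A$ is the minimal number of columns of such a nonnegative $B$; a CP factorization with that many columns is called minimal. *)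

From HB Require Import structures.
From mathcomp Require Import all_boot all_order all_algebra all_fingroup.
From mathcomp Require Import reals.
Set Implicit Arguments. Unset Strict Implicit. Unset Printing Implicit Defensive.
Import Order.TTheory GRing.Theory Num.Theory.
Local Open Scope ring_scope.

Definition nonneg_mx (R : realType) (m k : nat) (B : 'M[R]_(m, k)) : Prop :=
  forall i j, 0 <= B i j.

Definition pairwise_indep_cols (R : realType) (m k : nat) (B : 'M[R]_(m, k)) : Prop :=
  forall j1 j2 : 'I_k, j1 != j2 -> \rank (row_mx (col j1 B) (col j2 B)) = 2%N.

Definition cp_factorization (R : realType) (m k : nat) (A : 'M[R]_m) (B : 'M[R]_(m, k)) : Prop :=
  [/\ nonneg_mx B, pairwise_indep_cols B & B *m B^T = A].

Definition is_cp_rank (R : realType) (m : nat) (A : 'M[R]_m) (k : nat) : Prop :=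
  (exists B : 'M[R]_(m, k), nonneg_mx B /\ B *m B^T = A) /\
  (forall (k' : nat) (B : 'M[R]_(m, k')), nonneg_mx B -> B *m B^T = A -> (k <= k')%N).

Definition minimal_cp_factorization (R : realType) (m k : nat) (A : 'M[R]_m) (B : 'M[R]_(m, k)) : Prop :=
  cp_factorization A B /\ is_cp_rank A k.

(* Two factorizations are identified when C = B P for a permutation matrix P. *)
Definition cp_equiv (R : realType) (m k : nat) (B C : 'M[R]_(m, k)) : Prop :=
  exists s : 'S_k, C = B *m perm_mx s.

Definition infinitely_many_min_cp (R : realType) (m : nat) (A : 'M[R]_m) : Prop :=
  exists (k : nat) (f : nat -> 'M[R]_(m, k)),
    (forall i, minimal_cp_factorization A (f i)) /\
    (forall i j, i <> j -> ~ cp_equiv (f i) (f j)).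

From HB Require Import structures.
From mathcomp Require Import all_boot all_order all_algebra all_fingroup.
From mathcomp Require Import reals.
From mathcomp Require Import ring lra zify.
Set Implicit Arguments. Unset Strict Implicit. Unset Printing Implicit Defensive.
Import Order.TTheory GRing.Theory Num.Theory.
Local Open Scope ring_scope.

(* Write X = [b1 b2], so that A = X X^T and rank X = 2.  For every
   rotation Q = [[c, t], [-t, c]] with c^2 + t^2 = 1 we have Q Q^T = 1, hence
   (X Q)(X Q)^T = A, and X Q still has rank 2, so its two columns
   c b1 - t b2 and t b1 + c b2 are linearly independent.  Since
   supp b2 is contained in supp b1, some S >= 1 satisfies b2 <= S b1
   entrywise; for 0 < t <= 1/(2S) and c = sqrt(1 - t^2) >= 1/2 the matrix X Q is
   then nonnegative.  The cp-rank of A is 2 because rank (B B^T) = rank B over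
   the reals, so any factor B of A has at least rank A = 2 columns.  Finally
   X has full column rank, so X Q = X Q' P forces Q = Q' P, and inspecting a
   single entry shows that rotations with distinct t are not column
   permutations of one another.  Taking t_k = 1/(2S(k+1)) gives the family. *)

Lemma ord2P (j : 'I_(1 + 1)) : j = lshift 1 0 \/ j = rshift 1 0.
Proof. by case: (split_ordP j) => k ->; rewrite (ord1 k); [left | right]. Qed.

(* Over an ordered ring, W W^T = 0 forces W = 0 (diagonal entries are sums of squares). *)
Lemma mul_tr_eq0 (R : realDomainType) m n (W : 'M[R]_(m, n)) :
  W *m W^T = 0 -> W = 0.
Proof.
move=> WWT0; apply/matrixP => i j; rewrite mxE.
have sq0 : \sum_k W i k ^+ 2 = 0.
  move/matrixP/(_ i i): WWT0; rewrite !mxE => {2}<-.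
  by apply: eq_bigr => k _; rewrite mxE expr2.
have /(_ j isT)/eqP := psumr_eq0P (fun k _ => sqr_ge0 (W i k)) sq0.
by rewrite sqrf_eq0 => /eqP.
Qed.

(* Over an ordered field, X X^T has the same rank as X: the left kernels agree. *)
Lemma mxrank_mul_tr (R : realFieldType) m n (X : 'M[R]_(m, n)) :
  \rank (X *m X^T) = \rank X.
Proof.
apply/eqP; rewrite eqn_leq mxrankM_maxl /=.
have /mxrankS : (kermx (X *m X^T) <= kermx X)%MS.
  rewrite sub_kermx; apply/eqP/mul_tr_eq0.
  by rewrite trmx_mul !mulmxA -(mulmxA _ X) mulmx_ker mul0mx.
rewrite !mxrank_ker; have := rank_leq_row X; have := rank_leq_row (X *m X^T).
lia.
Qed.

Lemma full_col_rank_inj (R : fieldType) m n p (X : 'M[R]_(m, n)) (A B : 'M[R]_(n, p)) :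
  \rank X = n -> X *m A = X *m B -> A = B.
Proof.
move=> hX hXAB; have /row_free_inj XT_inj : row_free X^T by rewrite /row_free mxrank_tr hX.
by apply: trmx_inj; apply: XT_inj; rewrite /= -!trmx_mul hXAB.
Qed.

Lemma rank_row_mxC (R : fieldType) n (u v : 'cV[R]_n) :
  \rank (row_mx u v) = \rank (row_mx v u).
Proof. by rewrite -mxrank_tr tr_row_mx -addsmxE addsmxC addsmxE -tr_row_mx mxrank_tr. Qed.

Lemma pairwise_indep_cols2 (R : realType) n (B : 'M[R]_(n, 1 + 1)) :
  \rank B = 2%N -> pairwise_indep_cols B.
Proof.
move=> hB j1 j2.
have splitB : row_mx (col (lshift 1 0) B) (col (rshift 1 0) B) = B.
  apply/matrixP => i j; case: (ord2P j) => ->;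
  by rewrite ?row_mxEl ?row_mxEr mxE.
by case: (ord2P j1) => ->; case: (ord2P j2) => -> //;
  rewrite ?eqxx // => _; rewrite ?splitB // rank_row_mxC splitB.
Qed.

(* If A = X X^T with X nonnegative of full column rank k, then k is the cp-rank
   of A: any nonnegative factor B has rank B = rank A = k, hence >= k columns. *)
Lemma is_cp_rank_full (R : realType) n k (X : 'M[R]_(n, k)) :
  nonneg_mx X -> \rank X = k -> is_cp_rank (X *m X^T) k.
Proof.
move=> X_ge0 hX; split; first by exists X.
move=> k' B _ hB; rewrite -{1}hX -mxrank_mul_tr -hB mxrank_mul_tr.
exact: rank_leq_col.
Qed.

Definition rot (R : comNzRingType) (c t : R) : 'M[R]_(1 + 1) :=
  block_mx c%:M t%:M (- t)%:M c%:M.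

Lemma mul_rot (R : comNzRingType) n (b1 b2 : 'cV[R]_n) (c t : R) :
  row_mx b1 b2 *m rot c t = row_mx (c *: b1 - t *: b2) (t *: b1 + c *: b2).
Proof. by rewrite mul_row_block !mul_mx_scalar scaleNr addrC. Qed.

Lemma rot_orthogonal (R : comNzRingType) (c t : R) :
  c ^+ 2 + t ^+ 2 = 1 -> rot c t *m (rot c t)^T = 1%:M.
Proof.
move=> hct; rewrite tr_block_mx mulmx_block !tr_scalar_mx -!scalar_mxM -!raddfD /=.
by rewrite scalar_mx_block -hct -(raddf0 (@scalar_mx R 1)); congr block_mx; congr (_%:M); ring.
Qed.

(* The entry in position (2, 1) of a rotation determines its angle up to column
   permutation: if X Q' = X Q P then t = t' (given c > 0 and t' > 0). *)
Lemma rot_cp_equiv (R : realType) n (X : 'M[R]_(n, 1 + 1)) (c t c' t' : R) :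
  \rank X = 2%N -> 0 < c -> 0 < t' ->
  cp_equiv (X *m rot c t) (X *m rot c' t') -> t = t'.
Proof.
move=> hX hc ht' [s]; rewrite -mulmxA => /(full_col_rank_inj hX).
rewrite -[s]invgK -col_permE => /matrixP/(_ (rshift 1 0) (lshift 1 0)).
rewrite /rot block_mxEdl [col_perm _ _ _ _]mxE.
case: (ord2P ((s^-1)%g (lshift 1 0))) => ->;
  rewrite ?block_mxEdl ?block_mxEdr !mxE /= ?mulr1n => heq; [exact/esym/oppr_inj | lra].
Qed.


Lemma rot_min_cp (R : realType) n (b1 b2 : 'cV[R]_n) (c t : R) :
  (forall i, 0 <= b1 i 0) -> (forall i, 0 <= b2 i 0) ->
  \rank (row_mx b1 b2) = 2%N ->
  0 <= c -> 0 <= t -> c ^+ 2 + t ^+ 2 = 1 ->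
  (forall i, t * b2 i 0 <= c * b1 i 0) ->
  minimal_cp_factorization (b1 *m b1^T + b2 *m b2^T) (row_mx b1 b2 *m rot c t).
Proof.
move=> b1_ge0 b2_ge0 hr c_ge0 t_ge0 hct hdom.
set X := row_mx b1 b2.
have XXT : X *m X^T = b1 *m b1^T + b2 *m b2^T by rewrite tr_row_mx mul_row_col.
have Q_orth := rot_orthogonal hct.
have rank_XQ : \rank (X *m rot c t) = 2%N.
  by rewrite mxrankMfree // row_free_unit; case: (mulmx1_unit Q_orth).
have X_ge0 : nonneg_mx X.
  by move=> i j; case: (ord2P j) => ->; rewrite ?row_mxEl ?row_mxEr.
split; last by rewrite -XXT; apply: is_cp_rank_full.
split; last 1 first.
- by rewrite trmx_mul mulmxA -(mulmxA X) Q_orth mulmx1 XXT.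
- move=> i j; rewrite mul_rot; case: (ord2P j) => ->;
    rewrite ?row_mxEl ?row_mxEr !mxE; first by rewrite subr_ge0.
  by rewrite addr_ge0 // mulr_ge0.
- exact: pairwise_indep_cols2.
Qed.

Lemma support_domination (R : realFieldType) n (b1 b2 : 'cV[R]_n) :
  (forall i, 0 <= b1 i 0) -> (forall i, 0 <= b2 i 0) ->
  (forall i, b2 i 0 != 0 -> b1 i 0 != 0) ->
  exists2 S : R, 1 <= S & forall i, b2 i 0 <= S * b1 i 0.
Proof.
move=> b1_ge0 b2_ge0 hsupp.
have ratio_ge0 l : 0 <= b2 l 0 / b1 l 0 by rewrite divr_ge0.
exists (1 + \sum_l b2 l 0 / b1 l 0); first by rewrite lerDl sumr_ge0.
move=> i; have [b1i0 | b1i_neq0] := eqVneq (b1 i 0) 0.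
  have [-> | /hsupp] := eqVneq (b2 i 0) 0; first by rewrite b1i0 mulr0.
  by rewrite b1i0 eqxx.
have b1i_gt0 : 0 < b1 i 0 by rewrite lt_def b1i_neq0 b1_ge0.
have ratio_le : b2 i 0 / b1 i 0 <= \sum_l b2 l 0 / b1 l 0.
  by rewrite (bigD1 i) //= lerDl sumr_ge0.
rewrite -[X in X <= _](divfK b1i_neq0) ler_pM2r //; lra.
Qed.

Lemma unit_circle_cos (R : rcfType) (t : R) :
  0 <= t <= 1 / 2 ->
  1 / 2 <= Num.sqrt (1 - t ^+ 2) /\ Num.sqrt (1 - t ^+ 2) ^+ 2 + t ^+ 2 = 1.
Proof.
move=> /andP [t_ge0 t_le].
have hsq : Num.sqrt (1 - t ^+ 2) ^+ 2 = 1 - t ^+ 2 by rewrite sqr_sqrtr //; nra.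
split; last by rewrite hsq; ring.
have := sqrtr_ge0 (1 - t ^+ 2); nra.
Qed.

Definition angle (R : realFieldType) (S : R) (k : nat) : R := (2 * S * k.+1%:R)^-1.

Lemma angle_gt0 (R : realFieldType) (S : R) k : 0 < S -> 0 < angle S k.
Proof. by move=> S_gt0; rewrite invr_gt0 !mulr_gt0 // ltr0n. Qed.

(* t_k S <= 1/2: the rotation is small enough to keep the factor nonnegative. *)
Lemma angle_bound (R : realFieldType) (S : R) k : 0 < S -> angle S k * S <= 1 / 2.
Proof.
move=> S_gt0; have k_ge1 : 1 <= k.+1%:R :> R by rewrite ler1n.
have -> : angle S k * S = (2 * k.+1%:R)^-1.
  by rewrite /angle; field; apply/andP; split; apply/eqP; lra.
by rewrite -div1r ler_pdivrMr ?mulr_gt0 //; nra.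
Qed.

Lemma angle_inj (R : realFieldType) (S : R) : 0 < S -> injective (angle S).
Proof.
move=> S_gt0 i j /invr_inj /(mulfI _) eq_ij.
by apply/eqP; rewrite -eqSS -(eqr_nat R) eq_ij // mulf_neq0 // gt_eqF.
Qed.

Theorem mainTheorem1 (R : realType) (n : nat) (b1 b2 : 'cV[R]_n) :
  (2 <= n)%N ->
  (forall i, 0 <= b1 i 0) -> (forall i, 0 <= b2 i 0) ->
  \rank (row_mx b1 b2) = 2%N ->
  (forall i, b2 i 0 != 0 -> b1 i 0 != 0) ->
  infinitely_many_min_cp (b1 *m b1^T + b2 *m b2^T).
Proof.
move=> _ b1_ge0 b2_ge0 hr hsupp.
have [S S_ge1 hdom] := support_domination b1_ge0 b2_ge0 hsupp.
have S_gt0 : 0 < S by lra.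
pose c k := Num.sqrt (1 - angle S k ^+ 2).
have cos_props k : 1 / 2 <= c k /\ c k ^+ 2 + angle S k ^+ 2 = 1.
  apply: unit_circle_cos; have := angle_gt0 k S_gt0; have := angle_bound k S_gt0.
  by move=> tS_le t_gt0; apply/andP; split; nra.
exists 2%N, (fun k => row_mx b1 b2 *m rot (c k) (angle S k)); split.
- move=> k; have [c_ge hct] := cos_props k; have t_gt0 := angle_gt0 k S_gt0.
  apply: rot_min_cp => //; [lra | exact: ltW | move=> i].
  have := hdom i; have := b1_ge0 i; have := angle_bound k S_gt0; nra.
- move=> i j ij_neq /rot_cp_equiv eq_ij; apply: ij_neq; apply: (angle_inj S_gt0).
  apply: eq_ij => //; last exact: angle_gt0.
  by have [? _] := cos_props i; lra.
Qed.
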